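(* Let $T\geq 3$ be an integer, $L>0$, $D>0$, and let $\mathcal{K}\subset\mathbb{R}^d$ be a nonempty closed convex set with diameter at most $D$. For $t=1,\dots,T$ let $\ell_t:\mathbb{R}^d\to\mathbb{R}$ be convex and $L$-Lipschitz cost functions. Run the following Online Frank--Wolfe algorithm with parameters $$\eta=\frac{D}{2L}\left(\frac{3}{T}\right)^{3/4},\qquad \sigma=\min\left(1,\sqrt{\frac{3}{T}}\right),$$ starting from some $x_1\in\mathcal{K}$: for $t=1,\dots,T$, play $x_t$, incur $\ell_t(x_t)$, observe $g_t=\nabla \ell_t(x_t)$, set $\mathrm{dir}_t=\eta\sum_{s=1}^t g_s+(x_t-x_1)$, choose $v_t\in\arg\min_{v\in\mathcal{K}}\langle \mathrm{dir}_t,v\rangle$, and set $x_{t+1}=(1-\sigma)x_t+\sigma v_t$. Then for every $x_\star\in\mathcal{K}$, $$R_T\triangleq\sum_{t=1}^T\big(\ell_t(x_t)-\ell_t(x_\star)\big)\leq \frac{2D}{L\,3^{3/4}T^{1/4}}\sum_{t=1}^T\|g_t\|^2+\frac{L}{D\,3^{3/4}T^{1/4}}\sum_{t=1}^T\|x_t-v_t\|^2+\frac{L\,T^{3/4}}{D\,3^{3/4}}\|x_\star-x_1\|^2.$$ In particular, $R_T\leq \frac{4}{3^{3/4}}LDT^{3/4}<1.76\,LDT^{3/4}$.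
   Context: $\|\cdot\|$ is the Euclidean norm. $\nabla\ell_t(x_t)$ denotes the gradient (subgradient) of $\ell_t$ at $x_t$; $v_t$ is any minimizer of the linear function over $\mathcal{K}$ (the linear optimization oracle output). *)

From HB Require Import structures.
From mathcomp Require Import all_boot all_order all_algebra.
From mathcomp Require Import all_classical all_reals all_analysis.
Set Implicit Arguments. Unset Strict Implicit. Unset Printing Implicit Defensive.
Import Order.TTheory GRing.Theory Num.Theory.
Import numFieldNormedType.Exports.
Local Open Scope ring_scope.
Local Open Scope classical_set_scope.

Definition dotv {R : realType} {d : nat} (u v : 'rV[R]_d) : R :=
  \sum_(i < d) u 0 i * v 0 i.
Definition enorm {R : realType} {d : nat} (u : 'rV[R]_d) : R :=
  Num.sqrt (dotv u u).

Definition convex_setv {R : realType} {d : nat} (K : set 'rV[R]_d) : Prop :=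
  forall x y (lam : R), K x -> K y -> 0 <= lam <= 1 ->
    K (lam *: x + (1 - lam) *: y).

Definition convex_funv {R : realType} {d : nat} (f : 'rV[R]_d -> R) : Prop :=
  forall x y (lam : R), 0 <= lam <= 1 ->
    f (lam *: x + (1 - lam) *: y) <= lam * f x + (1 - lam) * f y.

Definition lipschitzv {R : realType} {d : nat} (L : R) (f : 'rV[R]_d -> R) : Prop :=
  forall x y, `|f x - f y| <= L * enorm (x - y).

Definition diam_le {R : realType} {d : nat} (K : set 'rV[R]_d) (D : R) : Prop :=
  forall x y, K x -> K y -> enorm (x - y) <= D.

Definition subgradient {R : realType} {d : nat} (f : 'rV[R]_d -> R) (x g : 'rV[R]_d) : Prop :=
  forall y, f x + dotv g (y - x) <= f y.

From HB Require Import structures.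
From mathcomp Require Import all_boot all_order all_algebra.
From mathcomp Require Import all_classical all_reals all_analysis.
From mathcomp Require Import ring lra zify.
Import Order.TTheory GRing.Theory Num.Theory.
Import numFieldNormedType.Exports.
Local Open Scope ring_scope.
Local Open Scope classical_set_scope.

(* The FTRL iterate y_t minimises F_t u = eta <g_1 + ... + g_t, u> + |u - x_1|^2 / 2
   over K, and dir_t is the gradient of F_t at x_t, so each step of the algorithm is
   a conditional-gradient step on the 1-strongly convex quadratic F_t.  Such a step
   shrinks the gap F_t(x) - F_t(y_t) from x_t to x_{t+1} by sigma |x_t - y_t|^2, up to
   sigma^2 |x_t - v_t|^2 / 2, while replacing F_{t-1} by F_t raises it by at most
   eta <g_t, x_t - y_t>.  Telescoping the gaps and Young's inequality bound
   sum_t eta <g_t, x_t - y_t>; the be-the-leader argument bounds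
   sum_t eta <g_t, y_t - xstar> by |xstar - x_1|^2 / 2; and by convexity
   eta (l_t(x_t) - l_t(xstar)) is at most the sum of these two inner products.
   The chosen eta and sigma balance the three resulting terms. *)

Section InnerProduct.
Context {R : realType} {d : nat}.
Implicit Types (u w z : 'rV[R]_d) (a : R).

Lemma dotvC u w : dotv u w = dotv w u.
Proof. by apply: eq_bigr => i _; rewrite mulrC. Qed.

Lemma dotvDl u w z : dotv (u + w) z = dotv u z + dotv w z.
Proof. by rewrite /dotv -big_split; apply: eq_bigr => i _; rewrite mxE mulrDl. Qed.

Lemma dotvZl a u w : dotv (a *: u) w = a * dotv u w.
Proof. by rewrite /dotv mulr_sumr; apply: eq_bigr => i _; rewrite mxE mulrA. Qed.

Lemma dotvNl u w : dotv (- u) w = - dotv u w.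
Proof. by rewrite -scaleN1r dotvZl mulN1r. Qed.

Lemma dotvBl u w z : dotv (u - w) z = dotv u z - dotv w z.
Proof. by rewrite dotvDl dotvNl. Qed.

Lemma dotvDr u w z : dotv z (u + w) = dotv z u + dotv z w.
Proof. by rewrite dotvC dotvDl !(dotvC z). Qed.

Lemma dotvZr a u w : dotv w (a *: u) = a * dotv w u.
Proof. by rewrite dotvC dotvZl dotvC. Qed.

Lemma dotvNr u w : dotv w (- u) = - dotv w u.
Proof. by rewrite dotvC dotvNl dotvC. Qed.

Lemma dotvBr u w z : dotv z (u - w) = dotv z u - dotv z w.
Proof. by rewrite dotvDr dotvNr. Qed.

Lemma dotv0l u : dotv 0 u = 0.
Proof. by rewrite -(scale0r 0) dotvZl mul0r. Qed.

Lemma dotv_subC u w : dotv (u - w) (u - w) = dotv (w - u) (w - u).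
Proof. by rewrite -opprB dotvNl dotvNr opprK. Qed.

Lemma dotv_ge0 u : 0 <= dotv u u.
Proof. by apply: sumr_ge0 => i _; rewrite -expr2 sqr_ge0. Qed.

Lemma dotv_suml (m n : nat) (f : nat -> 'rV[R]_d) w :
  dotv (\sum_(m <= s < n) f s) w = \sum_(m <= s < n) dotv (f s) w.
Proof.
rewrite /dotv; under eq_bigr do rewrite summxE mulr_suml.
by rewrite exchange_big.
Qed.

Lemma dotv_young (s : R) u w : 0 < s -> dotv u w <= dotv u u / s + s / 4 * dotv w w.
Proof.
move=> s_gt0; have := dotv_ge0 (2 *: u - s *: w).
rewrite !(dotvBl, dotvBr, dotvZl, dotvZr) (dotvC w u) => sqr_ge0.
rewrite -(ler_pM2l s_gt0).
have -> : s * (dotv u u / s + s / 4 * dotv w w) = dotv u u + s ^+ 2 / 4 * dotv w w.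
  by field; rewrite gt_eqF.
lra.
Qed.

Lemma enorm_sqr u : enorm u ^+ 2 = dotv u u.
Proof. by rewrite sqr_sqrtr // dotv_ge0. Qed.

Lemma enorm_ge0 u : 0 <= enorm u.
Proof. exact: sqrtr_ge0. Qed.

Lemma normr_le_enorm u : `|u| <= enorm u.
Proof.
rewrite [leLHS]/Num.norm /= mx_normrE; apply: bigmax_le; first exact: enorm_ge0.
move=> [i j] _ /=; rewrite (ord1 i) -(sqrtr_sqr (u 0 j)) ler_sqrt ?dotv_ge0 //.
rewrite /dotv (bigD1 j) //= -expr2 lerDl.
by apply: sumr_ge0 => k _; rewrite -expr2 sqr_ge0.
Qed.

Lemma dotv_continuous {T : topologicalType} {f h : T -> 'rV[R]_d} :
  continuous f -> continuous h -> continuous (fun t => dotv (f t) (h t)).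
Proof.
move=> cf ch; apply: continuous_big => [|i _ t]; first exact: add_continuous.
apply: continuousM.
  exact: (continuous_comp (cf t) (@coord_continuous _ _ _ 0 i (f t))).
exact: (continuous_comp (ch t) (@coord_continuous _ _ _ 0 i (h t))).
Qed.

End InnerProduct.

Lemma ge0_of_quadratic_ge0 {R : realFieldType} (a n : R) : 0 <= n ->
  (forall lam, 0 < lam <= 1 -> 0 <= lam * a + lam ^+ 2 * n) -> 0 <= a.
Proof.
move=> n_ge0 quad_ge0; apply/ler_addgt0Pr => e e_gt0.
pose lam := Order.min 1 (e / (n + 1)).
have lam_gt0 : 0 < lam by rewrite lt_min ltr01 divr_gt0 // ltr_wpDl.
have lam_le1 : lam <= 1 by rewrite ge_min lexx.
have lam_small : lam * (n + 1) <= e by rewrite -ler_pdivlMr ?ltr_wpDl // ge_min lexx orbT.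
have := quad_ge0 lam; rewrite lam_gt0 lam_le1 expr2 -mulrA -mulrDr pmulr_rge0 // => /(_ isT).
nra.
Qed.

Section FtrlObjective.
Context {R : realType} {d : nat}.
Implicit Types (c a u w y : 'rV[R]_d) (K : set 'rV[R]_d).

Definition ftrl_obj c a u : R := dotv c u + 1/2 * dotv (u - a) (u - a).

Lemma ftrl_obj_expand c a u w :
  ftrl_obj c a u =
  ftrl_obj c a w + dotv (c + (w - a)) (u - w) + 1/2 * dotv (u - w) (u - w).
Proof.
rewrite /ftrl_obj !(dotvDl, dotvDr, dotvNl, dotvNr).
have := dotvC u w; have := dotvC u a; have := dotvC w a; lra.
Qed.

Lemma ftrl_obj_continuous c a : continuous (ftrl_obj c a).
Proof.
have cB : continuous (fun u : 'rV[R]_d => u - a).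
  by move=> u; apply: continuousB => //; exact: cst_continuous.
move=> u; apply: continuousD.
  by apply: dotv_continuous u => [|?]; [exact: cst_continuous | exact: cvg_id].
exact: continuousM (@cst_continuous _ _ (1/2 : R) u) (dotv_continuous cB cB u).
Qed.

Lemma diam_le_bounded {K} {D : R} : K !=set0 -> diam_le K D -> bounded_set K.
Proof.
move=> [x0 Kx0] Kdiam; rewrite /= /bounded_near.
near=> M => y Ky /=.
have : D + `|x0| <= M by near: M; apply: nbhs_pinfty_ge; rewrite num_real.
apply: le_trans; rewrite -[y](subrK x0).
apply: le_trans (ler_normD _ _) _; rewrite lerD2r.
exact: le_trans (normr_le_enorm _) (Kdiam _ _ Ky Kx0).
Unshelve. all: by end_near.
Qed.

Lemma ftrl_obj_has_min {K} {D : R} c a : K !=set0 -> closed K -> diam_le K D ->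
  exists y, K y /\ forall u, K u -> ftrl_obj c a y <= ftrl_obj c a u.
Proof.
move=> K0 Kclosed Kdiam.
have Kcompact := bounded_closed_compact (diam_le_bounded K0 Kdiam) Kclosed.
have [y Ky ymin] := @compact_EVT_min _ _ (ftrl_obj c a) K K0 Kcompact
  (continuous_subspaceT (ftrl_obj_continuous c a)).
by exists y; split=> [|u Ku]; [rewrite -inE | apply: ymin; rewrite inE].
Qed.

(* First-order optimality at y, then the exact quadratic expansion around y. *)
Lemma ftrl_obj_min_growth K c a y : convex_setv K -> K y ->
    (forall u, K u -> ftrl_obj c a y <= ftrl_obj c a u) ->
  forall u, K u -> ftrl_obj c a y + 1/2 * dotv (u - y) (u - y) <= ftrl_obj c a u.
Proof.
move=> Kconvex Ky ymin u Ku; rewrite (ftrl_obj_expand c a u y).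
suff : 0 <= dotv (c + (y - a)) (u - y) by lra.
apply: ge0_of_quadratic_ge0 (dotv_ge0 (u - y)) _ => lam /andP[lam_gt0 lam_le1].
have lam01 : 0 <= lam <= 1 by rewrite ltW.
have := ymin _ (Kconvex u y lam Ku Ky lam01).
rewrite (ftrl_obj_expand c a (lam *: u + (1 - lam) *: y) y).
have -> : lam *: u + (1 - lam) *: y - y = lam *: (u - y).
  by apply/rowP => i; rewrite !mxE; ring.
rewrite !(dotvZl, dotvZr).
have := dotv_ge0 (u - y); nra.
Qed.

End FtrlObjective.

Lemma subgradient_enorm_le {R : realType} {d : nat} (L : R) (f : 'rV[R]_d -> R) z g :
  0 <= L -> lipschitzv L f -> subgradient f z g -> enorm g <= L.
Proof.
move=> L_ge0 f_lip g_sub.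
have := g_sub (z + g); have := f_lip (z + g) z.
rewrite addrAC subrr add0r -enorm_sqr => lip sub.
have := ler_norm (f (z + g) - f z); have := enorm_ge0 g; nra.
Qed.

Lemma sum_sqr_le_nat {R : realDomainType} (f : nat -> R) (M : R) (T : nat) :
  (forall t, (1 <= t <= T)%N -> 0 <= f t <= M) ->
  \sum_(1 <= t < T.+1) f t ^+ 2 <= T%:R * M ^+ 2.
Proof.
move=> f_bnd.
have -> : T%:R * M ^+ 2 = \sum_(1 <= t < T.+1) M ^+ 2.
  by rewrite sumr_const_nat subSS subn0 mulr_natl.
apply: ler_sum_nat => t /f_bnd /andP[f_ge0 f_le].
by rewrite ler_sqr ?nnegrE // (le_trans f_ge0).
Qed.

Section OnlineFrankWolfe.
Context {R : realType} {d T : nat} {K : set 'rV[R]_d} {eta sigma : R}.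
Context {ell : nat -> 'rV[R]_d -> R} {x v g y : nat -> 'rV[R]_d}.

Let F t := ftrl_obj (eta *: \sum_(1 <= s < t.+1) g s) (x 1%N).

Hypotheses (eta_gt0 : 0 < eta) (sigma_gt0 : 0 < sigma) (sigma_le1 : sigma <= 1).
Hypotheses (K_convex : convex_setv K) (x1_in_K : K (x 1%N)).
Hypothesis y_min : forall t, K (y t) /\ forall u, K u -> F t (y t) <= F t u.
Hypothesis ofw_step : forall t, (1 <= t <= T)%N ->
  subgradient (ell t) (x t) (g t) /\ K (v t) /\
  (forall w, K w -> dotv (eta *: (\sum_(1 <= s < t.+1) g s) + (x t - x 1%N)) (v t)
                 <= dotv (eta *: (\sum_(1 <= s < t.+1) g s) + (x t - x 1%N)) w) /\
  x t.+1 = (1 - sigma) *: x t + sigma *: v t.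

Let dist t := dotv (x t - y t) (x t - y t).
Let lag t := eta * dotv (g t) (x t - y t).
Let stride t := dotv (x t - v t) (x t - v t).
Let gap t := F t (x t.+1) - F t (y t).

Lemma ofw_iterate_in_K t : (1 <= t <= T.+1)%N -> K (x t).
Proof.
elim: t => [//|[_ _ //|t] IHt] ht.
have [_ [Kv [_ ->]]] := ofw_step t.+1 ltac:(lia).
have Kx : K (x t.+1) by apply: IHt; lia.
have sigma01 : 0 <= 1 - sigma <= 1 by rewrite subr_ge0 sigma_le1 gerBl ltW.
by have := K_convex _ _ _ Kx Kv sigma01; rewrite subKr.
Qed.

Lemma F0E u : F 0 u = 1/2 * dotv (u - x 1%N) (u - x 1%N).
Proof. by rewrite /F /ftrl_obj big_geq // scaler0 dotv0l add0r. Qed.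

Lemma F_succ t u : F t.+1 u = F t u + eta * dotv (g t.+1) u.
Proof. rewrite /F /ftrl_obj big_nat_recr //= scalerDr [dotv (_ + _) u]dotvDl !dotvZl; lra. Qed.

Lemma F_expand t u u' : F t u =
  F t u' + dotv (eta *: (\sum_(1 <= s < t.+1) g s) + (u' - x 1%N)) (u - u')
  + 1/2 * dotv (u - u') (u - u').
Proof. exact: ftrl_obj_expand. Qed.

Lemma F_growth t {u} : K u -> F t (y t) + 1/2 * dotv (u - y t) (u - y t) <= F t u.
Proof. by have [Ky ymin] := y_min t; exact: ftrl_obj_min_growth. Qed.

(* v_t does at least as well as y_t on the linearisation of F_t at x_t. *)
Lemma ofw_gap_contraction t : (1 <= t <= T)%N ->
  gap t <= F t (x t) - F t (y t) - sigma * dist t + sigma ^+ 2 / 2 * stride t.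
Proof.
move=> ht; have [_ [Kv [v_min x_next]]] := ofw_step _ ht.
have Kx : K (x t) by apply: ofw_iterate_in_K; lia.
have step : x t.+1 - x t = sigma *: (v t - x t).
  by rewrite x_next; apply/rowP => i; rewrite !mxE; ring.
have next := F_expand t (x t.+1) (x t).
rewrite step !dotvZr !dotvZl [dotv (v t - _) _]dotv_subC -/(stride t) dotvBr in next.
have at_y := F_expand t (y t) (x t).
rewrite [dotv (y t - _) _]dotv_subC -/(dist t) dotvBr in at_y.
have v_le_y := v_min (y t) (y_min t).1.
have growth := F_growth t Kx; rewrite -/(dist t) in growth.
have : sigma * (dotv (eta *: (\sum_(1 <= s < t.+1) g s) + (x t - x 1%N)) (v t)
                - dotv (eta *: (\sum_(1 <= s < t.+1) g s) + (x t - x 1%N)) (x t))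
       <= sigma * - dist t by rewrite ler_pM2l //; lra.
rewrite /gap; lra.
Qed.

Lemma ofw_gap_succ t : F t.+1 (x t.+1) - F t.+1 (y t.+1) <= gap t + lag t.+1.
Proof. by rewrite /gap /lag !F_succ dotvBr; have := (y_min t).2 _ (y_min t.+1).1; lra. Qed.

Lemma ofw_gap_descent t : (t < T)%N ->
  sigma * dist t.+1 <= lag t.+1 + sigma ^+ 2 / 2 * stride t.+1 + (gap t - gap t.+1).
Proof.
move=> tT; have := ofw_gap_succ t; have := @ofw_gap_contraction t.+1 ltac:(lia).
lra.
Qed.

Lemma ofw_sum_dist_le : sigma * \sum_(1 <= t < T.+1) dist t <=
  \sum_(1 <= t < T.+1) lag t + sigma ^+ 2 / 2 * \sum_(1 <= t < T.+1) stride t.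
Proof.
have gap0_le0 : gap 0 <= 0.
  by rewrite /gap !F0E subrr dotv0l; have := dotv_ge0 (y 0%N - x 1%N); lra.
have gapT_ge0 : 0 <= gap T.
  by rewrite /gap subr_ge0; apply: (y_min T).2; apply: ofw_iterate_in_K; lia.
have telescope_gap : \sum_(0 <= t < T) (gap t - gap t.+1) = gap 0%N - gap T.
  by rewrite -opprB -telescope_sumr // -sumrN; apply: eq_bigr => t _; rewrite opprB.
suff : sigma * \sum_(1 <= t < T.+1) dist t <= \sum_(1 <= t < T.+1) lag t
    + sigma ^+ 2 / 2 * \sum_(1 <= t < T.+1) stride t + (gap 0%N - gap T) by lra.
rewrite -telescope_gap !big_add1 /= !mulr_sumr -!big_split /=.
by apply: ler_sum_nat => t /andP[_ tT]; exact: ofw_gap_descent.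
Qed.

(* Young's inequality on each lag, after which ofw_sum_dist_le absorbs the distances. *)
Lemma ofw_sum_lag_le : \sum_(1 <= t < T.+1) lag t <=
  4/3 * (eta ^+ 2 / sigma * \sum_(1 <= t < T.+1) dotv (g t) (g t))
  + sigma ^+ 2 / 6 * \sum_(1 <= t < T.+1) stride t.
Proof.
have young : \sum_(1 <= t < T.+1) lag t <=
    eta ^+ 2 / sigma * \sum_(1 <= t < T.+1) dotv (g t) (g t)
    + sigma / 4 * \sum_(1 <= t < T.+1) dist t.
  rewrite !mulr_sumr -big_split /=; apply: ler_sum_nat => t _.
  rewrite /lag -dotvZl; apply: le_trans (dotv_young _ _ _ sigma_gt0) _.
  by rewrite dotvZl dotvZr mulrA -expr2 mulrAC.
have := ofw_sum_dist_le.
have : sigma / 4 * \sum_(1 <= t < T.+1) dist t = (sigma * \sum_(1 <= t < T.+1) dist t) / 4.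
  by rewrite mulrAC.
lra.
Qed.

Lemma ftrl_be_the_leader u : K u ->
  \sum_(1 <= t < T.+1) eta * dotv (g t) (y t) <=
  eta * \sum_(1 <= t < T.+1) dotv (g t) u + 1/2 * dotv (u - x 1%N) (u - x 1%N).
Proof.
move=> Ku.
have leader_step t : eta * dotv (g t.+1) (y t.+1) <= F t.+1 (y t.+1) - F t (y t).
  by rewrite F_succ; have := (y_min t).2 _ (y_min t.+1).1; lra.
have F0_ge0 : 0 <= F 0 (y 0%N) by rewrite F0E; have := dotv_ge0 (y 0%N - x 1%N); lra.
have FT_le := (y_min T).2 u Ku.
have FTu : F T u = eta * \sum_(1 <= t < T.+1) dotv (g t) u + 1/2 * dotv (u - x 1%N) (u - x 1%N).
  by rewrite /F /ftrl_obj dotvZl dotv_suml.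
rewrite big_add1 /=.
apply: le_trans (ler_sum_nat (fun t _ => leader_step t)) _.
rewrite telescope_sumr //; lra.
Qed.

Lemma ofw_linearized_regret u : K u ->
  eta * \sum_(1 <= t < T.+1) (ell t (x t) - ell t u) <=
  \sum_(1 <= t < T.+1) lag t + \sum_(1 <= t < T.+1) eta * dotv (g t) (y t)
  - eta * \sum_(1 <= t < T.+1) dotv (g t) u.
Proof.
move=> Ku; rewrite !mulr_sumr -big_split -sumrB /=; apply: ler_sum_nat => t ht.
have [subgrad _] := ofw_step _ ht; have := subgrad u.
rewrite /lag !dotvBr => sub_ineq.
have : 0 <= eta * (ell t u - ell t (x t) - (dotv (g t) u - dotv (g t) (x t))).
  by apply: mulr_ge0; [exact: ltW | lra].
lra.
Qed.

Lemma ofw_regret_bound u : K u ->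
  \sum_(1 <= t < T.+1) (ell t (x t) - ell t u) <=
  4/3 * eta / sigma * \sum_(1 <= t < T.+1) enorm (g t) ^+ 2
  + sigma ^+ 2 / (6 * eta) * \sum_(1 <= t < T.+1) enorm (x t - v t) ^+ 2
  + 1 / (2 * eta) * enorm (u - x 1%N) ^+ 2.
Proof.
move=> Ku; rewrite -(ler_pM2l eta_gt0) enorm_sqr.
rewrite (eq_bigr _ (fun t _ => enorm_sqr (g t))).
rewrite (eq_bigr _ (fun t _ => enorm_sqr (x t - v t))).
have := ofw_linearized_regret u Ku; have := ftrl_be_the_leader u Ku.
have := ofw_sum_lag_le; rewrite /stride.
have -> : forall G W N, eta * (4/3 * eta / sigma * G + sigma ^+ 2 / (6 * eta) * W
    + 1 / (2 * eta) * N) = 4/3 * (eta ^+ 2 / sigma * G) + sigma ^+ 2 / 6 * W + 1/2 * N.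
  by move=> G W N; field; rewrite !gt_eqF.
lra.
Qed.

Lemma ofw_regret_le (L D : R) u : 0 <= L -> diam_le K D ->
    (forall t, (1 <= t <= T)%N -> lipschitzv L (ell t)) -> K u ->
  \sum_(1 <= t < T.+1) (ell t (x t) - ell t u) <=
  4/3 * eta / sigma * (T%:R * L ^+ 2) + sigma ^+ 2 / (6 * eta) * (T%:R * D ^+ 2)
  + 1 / (2 * eta) * D ^+ 2.
Proof.
move=> L_ge0 Kdiam ell_lip Ku; apply: le_trans (ofw_regret_bound u Ku) _.
apply: lerD; [apply: lerD|]; apply: ler_wpM2l.
- by rewrite divr_ge0 ?mulr_ge0 ?ltW.
- apply: sum_sqr_le_nat => t ht; rewrite enorm_ge0 /=.
  by have [g_sub _] := ofw_step _ ht; exact: subgradient_enorm_le (ell_lip t ht) g_sub.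
- by rewrite divr_ge0 ?exprn_ge0 ?mulr_ge0 ?ltW.
- apply: sum_sqr_le_nat => t ht; rewrite enorm_ge0 /=.
  have [_ [Kv _]] := ofw_step _ ht.
  by apply: Kdiam Kv; apply: ofw_iterate_in_K; lia.
- by rewrite divr_ge0 ?mulr_ge0 ?ltW.
- have D_ge0 := le_trans (enorm_ge0 _) (Kdiam _ _ Ku Ku).
  by rewrite ler_sqr ?nnegrE ?enorm_ge0 // Kdiam.
Qed.

End OnlineFrankWolfe.

Lemma powR_quarter {R : realType} (z : R) (n : nat) : 0 <= z ->
  z `^ (n%:R / 4) = (z `^ (1/4)) ^+ n.
Proof. by move=> z_ge0; rewrite -powR_mulrn ?powR_ge0 // -powRrM mul1r mulrC. Qed.

Lemma powR_quarter_exp4 {R : realType} (z : R) : 0 <= z -> (z `^ (1/4)) ^+ 4 = z.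
Proof. by move=> z_ge0; rewrite -powR_quarter // divff ?powRr1. Qed.

Lemma four_div_powR34_3_lt {R : realType} : 4 / 3 `^ (3 / 4) < 176 / 100 :> R.
Proof.
have a_gt0 : 0 < 3 `^ (1/4) :> R by apply: powR_gt0.
have a4 := @powR_quarter_exp4 R 3 (ler0n R 3).
rewrite powR_quarter ?ler0n // ltr_pdivrMr ?exprn_gt0 //.
move: a_gt0 a4; set a := 3 `^ (1/4) => a_gt0 a4.
have a_lt : a < 132/100.
  rewrite ltNge; apply/negP => a_ge; have : a ^+ 4 = (a ^+ 2) ^+ 2 by rewrite -exprM.
  have : 17424/10000 <= a ^+ 2 by rewrite expr2; nra.
  nra.
have : a ^+ 3 * a = 3 by rewrite -exprSr.
nra.
Qed.

Lemma powR_inv {R : realType} (z r : R) : 0 <= z -> z^-1 `^ r = (z `^ r)^-1.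
Proof. by move=> z_ge0; rewrite -powR_inv1 // powRAC powR_inv1 ?powR_ge0. Qed.

Section StepSizes.
Context {R : realType} {T : nat} {L D : R}.
Hypotheses (T_ge3 : (3 <= T)%N) (L_gt0 : 0 < L) (D_gt0 : 0 < D).

Local Notation a := (3 `^ (1/4) : R).
Local Notation b := (T%:R `^ (1/4) : R).

Let a_gt0 : 0 < a. Proof. by apply: powR_gt0; rewrite ltr0n. Qed.
Let b_gt0 : 0 < b. Proof. by apply: powR_gt0; rewrite ltr0n; lia. Qed.
Let a_exp4 : a ^+ 4 = 3. Proof. exact/powR_quarter_exp4/ler0n. Qed.
Let b_exp4 : b ^+ 4 = T%:R. Proof. exact/powR_quarter_exp4/ler0n. Qed.

Lemma ofw_etaE : (3 / T%:R) `^ (3 / 4) = a ^+ 3 / b ^+ 3.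
Proof.
rewrite powR_quarter ?divr_ge0 ?ler0n // powRM ?invr_ge0 ?ler0n //.
by rewrite powR_inv ?ler0n // exprMn exprVn.
Qed.

Lemma ofw_sigmaE : Order.min 1 (Num.sqrt (3 / T%:R)) = a ^+ 2 / b ^+ 2.
Proof.
have [a_ge0 b_ge0] := (ltW a_gt0, ltW b_gt0).
have ab_ge0 : 0 <= a ^+ 2 / b ^+ 2 by rewrite divr_ge0 ?exprn_ge0.
have -> : 3 / T%:R = (a ^+ 2 / b ^+ 2) ^+ 2 by rewrite expr_div_n -!exprM a_exp4 b_exp4.
rewrite sqrtr_sqr ger0_norm // min_r // ler_pdivrMr ?exprn_gt0 // (mul1r (b ^+ 2)).
by rewrite -ler_sqr ?nnegrE ?exprn_ge0 // -!exprM a_exp4 b_exp4 ler_nat.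
Qed.

Lemma ofw_step_sizes :
  let eta := D / (2 * L) * (3 / T%:R) `^ (3 / 4) in
  let sigma : R := Order.min 1 (Num.sqrt (3 / T%:R)) in
  [/\ 0 < eta, 0 < sigma & sigma <= 1].
Proof.
move=> eta sigma; split; last by rewrite ge_min lexx.
  by rewrite /eta ofw_etaE; apply: mulr_gt0; apply: divr_gt0; rewrite ?mulr_gt0 ?exprn_gt0.
by rewrite /sigma ofw_sigmaE divr_gt0 ?exprn_gt0.
Qed.

Lemma ofw_coefficients :
  let eta := D / (2 * L) * (3 / T%:R) `^ (3 / 4) in
  let sigma := Order.min 1 (Num.sqrt (3 / T%:R)) in
  [/\ 2 * D / (L * 3 `^ (3 / 4) * T%:R `^ (1 / 4)) = 4/3 * eta / sigma,
      L / (D * 3 `^ (3 / 4) * T%:R `^ (1 / 4)) = sigma ^+ 2 / (6 * eta),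
      L * T%:R `^ (3 / 4) / (D * 3 `^ (3 / 4)) = 1 / (2 * eta) &
      4/3 * eta / sigma * (T%:R * L ^+ 2) + sigma ^+ 2 / (6 * eta) * (T%:R * D ^+ 2)
      + 1 / (2 * eta) * D ^+ 2 = 4 / 3 `^ (3 / 4) * L * D * T%:R `^ (3 / 4)].
Proof.
move=> eta sigma; rewrite /eta /sigma ofw_etaE ofw_sigmaE !powR_quarter ?ler0n //.
move: a_gt0 b_gt0 a_exp4 b_exp4; set a' := a; set b' := b.
move=> /gt_eqF a_neq0 /gt_eqF b_neq0 a4 b4.
rewrite -b4 (_ : 6 = 2 * 3) ?(natrM R 2 3) // -a4.
by split; field; rewrite a_neq0 b_neq0 !gt_eqF.
Qed.

End StepSizes.

Theorem theorem1 (R : realType) (d T : nat) (L D : R)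
  (K : set 'rV[R]_d) (ell : nat -> 'rV[R]_d -> R)
  (x v g : nat -> 'rV[R]_d) :
  (3 <= T)%N -> 0 < L -> 0 < D ->
  K !=set0 -> closed K -> convex_setv K -> diam_le K D ->
  (forall t, (1 <= t <= T)%N -> convex_funv (ell t) /\ lipschitzv L (ell t)) ->
  let eta := D / (2 * L) * (3 / T%:R) `^ (3 / 4) in
  let sigma := Order.min 1 (Num.sqrt (3 / T%:R)) in
  K (x 1%N) ->
  (forall t, (1 <= t <= T)%N ->
     subgradient (ell t) (x t) (g t) /\
     let dir := eta *: (\sum_(1 <= s < t.+1) g s) + (x t - x 1%N) in
     K (v t) /\ (forall w, K w -> dotv dir (v t) <= dotv dir w) /\
     x t.+1 = (1 - sigma) *: x t + sigma *: v t) ->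
  forall xstar, K xstar ->
  let RT := \sum_(1 <= t < T.+1) (ell t (x t) - ell t xstar) in
  RT <= 2 * D / (L * 3 `^ (3 / 4) * T%:R `^ (1 / 4))
          * \sum_(1 <= t < T.+1) enorm (g t) ^+ 2
        + L / (D * 3 `^ (3 / 4) * T%:R `^ (1 / 4))
          * \sum_(1 <= t < T.+1) enorm (x t - v t) ^+ 2
        + L * T%:R `^ (3 / 4) / (D * 3 `^ (3 / 4)) * enorm (xstar - x 1%N) ^+ 2
  /\ RT <= 4 / 3 `^ (3 / 4) * L * D * T%:R `^ (3 / 4)
  /\ 4 / 3 `^ (3 / 4) * L * D * T%:R `^ (3 / 4) < 176 / 100 * L * D * T%:R `^ (3 / 4).
Proof.
move=> T_ge3 L_gt0 D_gt0 K0 Kclosed Kconvex Kdiam ell_lip eta sigma x1_in_K ofw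
  xstar xstar_in_K RT.
have [eta_gt0 sigma_gt0 sigma_le1] := ofw_step_sizes T_ge3 L_gt0 D_gt0.
have [coef_g coef_w coef_x coef_total] := ofw_coefficients T_ge3 L_gt0 D_gt0.
have [y y_min] := choice (fun t =>
  ftrl_obj_has_min (eta *: \sum_(1 <= s < t.+1) g s) (x 1%N) K0 Kclosed Kdiam).
have regret := ofw_regret_bound eta_gt0 sigma_gt0 sigma_le1 Kconvex x1_in_K y_min ofw
  xstar xstar_in_K.
split; first by rewrite coef_g coef_w coef_x.
split.
  rewrite -coef_total.
  exact: ofw_regret_le eta_gt0 sigma_gt0 sigma_le1 Kconvex x1_in_K y_min ofw
    L D xstar (ltW L_gt0) Kdiam (fun t ht => (ell_lip t ht).2) xstar_in_K.
have T_pos : 0 < T%:R `^ (3 / 4) :> R by apply: powR_gt0; rewrite ltr0n; lia.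
by rewrite !ltr_pM2r // four_div_powR34_3_lt.
Qed.
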